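(* Let $V$ be a Banach $\mathbb O$-bimodule, let $T\in\mathscr B_{\mathcal{RO}}(V)$ be power-associative and let $s\in\mathbb O$ with $|s|>\|T\|$. Then $R_s-T$ is invertible in $\mathscr B_{\mathbb R}(V)$ and $$(R_s-T)^{\circledcirc-}=\sum_{n\ge0}T^n\odot s^{-1-n},\qquad (R_s-T)^{-\circledcirc}=\sum_{n\ge0}s^{-1-n}\odot T^n,$$ the series converging (pointwise in norm) in $\mathscr B_{\mathcal{RO}}(V)$.
   Context: $\mathbb O$ is the real octonion algebra with basis $e_0=1,\dots,e_7$, conjugation $\bar x$, norm $|x|$. An $\mathbb O$-bimodule is a real vector space $M$ with real-bilinear left and right multiplications by $\mathbb O$ (with $1x=x1=x$) whose associators $[p,q,x]=(pq)x-p(qx)$, $[p,x,q]=(px)q-p(xq)$, $[x,p,q]=(xp)q-x(pq)$ satisfy $[p,q,x]=[q,x,p]=[x,p,q]=-[q,p,x]$. Its real part is $\operatorname{Re}M=\{m: pm=mp,\ [p,q,m]=0\ \forall p,q\}$; every $x$ decomposes uniquely as $x=\sum_{i=0}^7e_ix_i$ with $x_i\in\operatorname{Re}M$ and $\operatorname{Re}x:=x_0$. A Banach $\mathbb O$-bimodule is one with a complete norm with $\|px\|=\|xp\|=|p|\|x\|$. $\mathscr B_{\mathbb R}(V)$: bounded real-linear operators, ordinary composition and powers; $T$ is invertible if it has an inverse in $\mathscr B_{\mathbb R}(V)$. $R_sv=vs$. For real-linear $f$, $B_p(f,x)=f(x)p-f(xp)$; $f$ is right para-linear if $\operatorname{Re}B_p(f,x)=0$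 for all $p,x$; $\mathscr B_{\mathcal{RO}}(V)$ denotes bounded right para-linear operators, an $\mathbb O$-bimodule via $(p\odot f)(x)=pf(x)+B_p(f,x)$, $(f\odot p)(x)=f(px)-B_p(f,x)$. $T\in\mathscr B_{\mathcal{RO}}(V)$ is power-associative if $T^n\in\mathscr B_{\mathcal{RO}}(V)$ for all $n\in\mathbb N$. For real-linear $h:\operatorname{Re}V\to V$, $(\operatorname{ext}h)(\sum_ix_ie_i)=\sum_ih(x_i)e_i$ ($x_i\in\operatorname{Re}V$); for real-linear $h:V\to\operatorname{Re}V$, $(\operatorname{lif}h)(x)=\sum_{i=0}^7h(x\bar e_i)e_i$. For invertible $S\in\mathscr B_{\mathbb R}(V)$, the right and left regular inverses are $S^{\circledcirc-}=\operatorname{ext}(S^{-1}|_{\operatorname{Re}V})$ and $S^{-\circledcirc}=\operatorname{lif}(\operatorname{Re}\circ S^{-1})$. *)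

From HB Require Import structures.
From mathcomp Require Import all_boot all_order all_algebra.
From mathcomp Require Import all_classical all_reals all_analysis.
Set Implicit Arguments. Unset Strict Implicit. Unset Printing Implicit Defensive.
Import Order.TTheory GRing.Theory Num.Theory.
Local Open Scope ring_scope.
Local Open Scope classical_set_scope.

Section Octonions.
Variable R : realType.

Record quat := Quat { qr : R; qi : R; qj : R; qk : R }.

Definition qadd (a b : quat) := Quat (qr a + qr b) (qi a + qi b) (qj a + qj b) (qk a + qk b).
Definition qopp (a : quat) := Quat (- qr a) (- qi a) (- qj a) (- qk a).
Definition qscale (c : R) (a : quat) := Quat (c * qr a) (c * qi a) (c * qj a) (c * qk a).
Definition qconj (a : quat) := Quat (qr a) (- qi a) (- qj a) (- qk a).
Definition qmul (a b : quat) :=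
  Quat (qr a * qr b - qi a * qi b - qj a * qj b - qk a * qk b)
       (qr a * qi b + qi a * qr b + qj a * qk b - qk a * qj b)
       (qr a * qj b - qi a * qk b + qj a * qr b + qk a * qi b)
       (qr a * qk b + qi a * qj b - qj a * qi b + qk a * qr b).
Definition qnorm2 (a : quat) := qr a ^+ 2 + qi a ^+ 2 + qj a ^+ 2 + qk a ^+ 2.
Definition qzero := Quat 0 0 0 0.
Definition qone := Quat 1 0 0 0.

(* Octonions by the Cayley--Dickson construction:
   (a,b)(c,d) = (ac - conj(d) b, d a + b conj(c)). *)
Record oct := Oct { ofst : quat; osnd : quat }.

Definition oadd (x y : oct) := Oct (qadd (ofst x) (ofst y)) (qadd (osnd x) (osnd y)).
Definition oscale (c : R) (x : oct) := Oct (qscale c (ofst x)) (qscale c (osnd x)).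
Definition omul (x y : oct) :=
  Oct (qadd (qmul (ofst x) (ofst y)) (qopp (qmul (qconj (osnd y)) (osnd x))))
      (qadd (qmul (osnd y) (ofst x)) (qmul (osnd x) (qconj (ofst y)))).
Definition oconj (x : oct) := Oct (qconj (ofst x)) (qopp (osnd x)).
Definition oone := Oct qone qzero.
Definition onorm2 (x : oct) := qnorm2 (ofst x) + qnorm2 (osnd x).
Definition onorm (x : oct) : R := Num.sqrt (onorm2 x).
Definition octinv (x : oct) := oscale (onorm2 x)^-1 (oconj x).
(* x^n (octonions are power-associative) *)
Definition oexp (x : oct) (n : nat) := iter n (omul x) oone.

Definition qbasis (k : nat) : quat :=
  match k with
  | 0 => Quat 1 0 0 0 | 1 => Quat 0 1 0 0 | 2 => Quat 0 0 1 0 | _ => Quat 0 0 0 1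
  end.
Definition obasis (i : 'I_8) : oct :=
  if (i < 4)%N then Oct (qbasis i) qzero else Oct qzero (qbasis (i - 4)).

End Octonions.
Arguments obasis {R} i.
Arguments qbasis {R} k.
Arguments oone {R}.
Arguments qone {R}.
Arguments qzero {R}.

Section Bimodule.
Variables (R : realType) (V : normedModType R).
Variables (lm : oct R -> V -> V) (rm : V -> oct R -> V).

Definition assocL (p q : oct R) (x : V) := lm (omul p q) x - lm p (lm q x).
Definition assocM (p : oct R) (x : V) (q : oct R) := rm (lm p x) q - lm p (rm x q).
Definition assocR (x : V) (p q : oct R) := rm (rm x p) q - rm x (omul p q).

Definition is_real_elt (m : V) : Prop :=
  (forall p, lm p m = rm m p) /\ (forall p q, assocL p q m = 0).

Definition decomposes (x : V) (c : 'I_8 -> V) : Prop :=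
  (forall i, is_real_elt (c i)) /\ x = \sum_(i < 8) lm (obasis i) (c i).

(* Banach O-bimodule axioms; the unique decomposition x = sum e_i x_i with
   x_i in Re V is recorded as part of the setting. *)
Definition Banach_Obimodule : Prop :=
  (forall p (a : R) x y, lm p (a *: x + y) = a *: lm p x + lm p y) /\
  (forall p (a : R) x y, rm (a *: x + y) p = a *: rm x p + rm y p) /\
  (forall p q (a : R) x, lm (oadd (oscale a p) q) x = a *: lm p x + lm q x) /\
  (forall p q (a : R) x, rm x (oadd (oscale a p) q) = a *: rm x p + rm x q) /\
  (forall x, lm oone x = x /\ rm x oone = x) /\
  (forall p q x, assocL p q x = assocM q x p /\ assocM q x p = assocR x p q
                 /\ assocR x p q = - assocL q p x) /\
  (forall x, exists c, decomposes x c /\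
               forall c', decomposes x c' -> forall i, c' i = c i) /\
  (forall p x, `| lm p x | = onorm p * `| x | /\ `| rm x p | = onorm p * `| x |).

Definition comp (x : V) : 'I_8 -> V :=
  match pselect (exists c, decomposes x c) with
  | left h => projT1 (cid h)
  | right _ => fun _ => 0
  end.

Definition ReV (x : V) : V := comp x ord0.

Definition Bp (f : V -> V) (p : oct R) (x : V) : V := rm (f x) p - f (rm x p).

Definition right_paralinear (f : V -> V) : Prop := forall p x, ReV (Bp f p x) = 0.

Definition bounded_linear (f : V -> V) : Prop :=
  (forall (a : R) x y, f (a *: x + y) = a *: f x + f y) /\
  exists C : R, forall x, `| f x | <= C * `| x |.

Definition BRO (f : V -> V) : Prop := bounded_linear f /\ right_paralinear f.

Definition opnorm (f : V -> V) : R :=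
  inf [set C : R | 0 <= C /\ forall x, `| f x | <= C * `| x |].

Definition lodot (p : oct R) (f : V -> V) : V -> V := fun x => lm p (f x) + Bp f p x.
Definition rodot (f : V -> V) (p : oct R) : V -> V := fun x => f (lm p x) - Bp f p x.

Definition Rmul (s : oct R) : V -> V := fun v => rm v s.

Definition power_associative (T : V -> V) : Prop := forall n : nat, BRO (iter n T).

Definition ext (h : V -> V) : V -> V :=
  fun x => \sum_(i < 8) rm (h (comp x i)) (obasis i).
Definition lif (h : V -> V) : V -> V :=
  fun x => \sum_(i < 8) rm (h (rm x (oconj (obasis i)))) (obasis i).

Definition right_reg_inv (Sinv : V -> V) : V -> V := ext Sinv.
Definition left_reg_inv (Sinv : V -> V) : V -> V := lif (fun y => ReV (Sinv y)).

End Bimodule.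

(* Let C < |s| bound T and put K y := T(y) s^-1. Since C |s^-1| < 1 the Neumann
   series G := sum_n K^n converges and inverts 1 - K, and (R_s - T)^-1 x := G (x s^-1).
   This uses that right multiplications by elements of the plane R 1 + R s compose
   like the elements themselves: the right associator [x, p, q] is alternating, so it
   vanishes on that plane, which contains every power of s^-1.
   Para-linearity makes each T^n commute with right multiplications on real elements,
   so on a real m the partial sums sum_(n < N) T^n(m) s^(-1-n) telescope to
   S^-1 m - S^-1 (T^N(m) s^-N); similarly the real parts of the partial sums of
   sum_n s^(-1-n) . T^n telescope.  Both remainders are O((C / |s|)^N), the real part
   being 1-Lipschitz by the identity 12 Re x = 4 x + sum_k e_k (x e_k^* ). *)

From Pilot Require Import Defs.
From HB Require Import structures.
From mathcomp Require Import all_boot all_order all_algebra.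
From mathcomp Require Import all_classical all_reals all_analysis.
From mathcomp Require Import ring lra.
Import Order.TTheory GRing.Theory Num.Theory numFieldNormedType.Exports.
Local Open Scope ring_scope.
Local Open Scope classical_set_scope.

Set Implicit Arguments. Unset Strict Implicit. Unset Printing Implicit Defensive.

Section OctonionAlgebra.
Variable R : realType.
Implicit Types (x y z p q : oct R) (a b c d : R).

Definition oRe x : R := qr (ofst x).
Definition ozero : oct R := Oct qzero qzero.
Definition ocoord x (i : 'I_8) : R :=
  nth 0 [:: qr (ofst x); qi (ofst x); qj (ofst x); qk (ofst x);
            qr (osnd x); qi (osnd x); qj (osnd x); qk (osnd x)] i.

Lemma Oct_congr (a0 a1 a2 a3 a4 a5 a6 a7 b0 b1 b2 b3 b4 b5 b6 b7 : R) :
  a0 = b0 -> a1 = b1 -> a2 = b2 -> a3 = b3 -> a4 = b4 -> a5 = b5 -> a6 = b6 -> a7 = b7 ->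
  Oct (Quat a0 a1 a2 a3) (Quat a4 a5 a6 a7) = Oct (Quat b0 b1 b2 b3) (Quat b4 b5 b6 b7).
Proof. by move=> -> -> -> -> -> -> -> ->. Qed.

Ltac oct_coords :=
  repeat match goal with x : oct _ |- _ => destruct x as [[? ? ? ?] [? ? ? ?]] end;
  cbv beta iota zeta delta [oRe ozero omul oadd oscale oconj oone qone qzero qadd
    qmul qopp qconj qscale onorm2 qnorm2 ofst osnd qr qi qj qk].
Ltac oct_ring := oct_coords; first [apply: Oct_congr; ring | ring].

Lemma oRe_mulC x y : oRe (omul x y) = oRe (omul y x).
Proof. oct_ring. Qed.

Lemma oRe_mulA x y z : oRe (omul (omul x y) z) = oRe (omul x (omul y z)).
Proof. oct_ring. Qed.

Lemma oscale1 x : oscale 1 x = x.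
Proof. oct_ring. Qed.

Lemma oaddo0 x : oadd x ozero = x.
Proof. oct_ring. Qed.

Lemma omul1o x : omul oone x = x.
Proof. oct_ring. Qed.

Lemma omulo1 x : omul x oone = x.
Proof. oct_ring. Qed.

Lemma omul0o x : omul ozero x = ozero.
Proof. oct_ring. Qed.

Lemma omulo0 x : omul x ozero = ozero.
Proof. oct_ring. Qed.

Lemma omulDl a p q x :
  omul (oadd (oscale a p) q) x = oadd (oscale a (omul p x)) (omul q x).
Proof. oct_ring. Qed.

Lemma omulDr a p q x :
  omul x (oadd (oscale a p) q) = oadd (oscale a (omul x p)) (omul x q).
Proof. oct_ring. Qed.

Lemma onorm2M x y : onorm2 (omul x y) = onorm2 x * onorm2 y.
Proof. oct_ring. Qed.

Lemma onorm2_ge0 x : 0 <= onorm2 x.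
Proof. oct_coords; by do ! (apply: addr_ge0 || apply: sqr_ge0). Qed.

Lemma onormM x y : onorm (omul x y) = onorm x * onorm y.
Proof. by rewrite /onorm onorm2M sqrtrM // onorm2_ge0. Qed.

Lemma onorm1 : onorm (@oone R) = 1.
Proof. by rewrite /onorm (_ : onorm2 oone = 1) ?sqrtr1 //; oct_ring. Qed.

Lemma onorm0 : onorm ozero = 0.
Proof. by rewrite /onorm (_ : onorm2 ozero = 0) ?sqrtr0 //; oct_ring. Qed.

Lemma onorm_oexp x n : onorm (oexp x n) = onorm x ^+ n.
Proof.
elim: n => [|n IH]; first by rewrite expr0 onorm1.
by rewrite /oexp iterS -/(oexp _ _) onormM IH exprS.
Qed.

Lemma onorm2V x : onorm2 x != 0 -> onorm2 (octinv x) = (onorm2 x)^-1.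
Proof.
move=> x_neq0; rewrite /octinv.
have -> : onorm2 (oscale (onorm2 x)^-1 (oconj x)) = (onorm2 x)^-1 ^+ 2 * onorm2 x.
  by move: (onorm2 x)^-1 => c; oct_ring.
by rewrite expr2 -mulrA mulVf // mulr1.
Qed.

Lemma onormV x : onorm2 x != 0 -> onorm (octinv x) = (onorm x)^-1.
Proof. by move=> x_neq0; rewrite /onorm onorm2V // sqrtrV // onorm2_ge0. Qed.

Definition o0 : 'I_8 := @Ordinal 8 0 isT.
Definition o1 : 'I_8 := @Ordinal 8 1 isT.
Definition o2 : 'I_8 := @Ordinal 8 2 isT.
Definition o3 : 'I_8 := @Ordinal 8 3 isT.
Definition o4 : 'I_8 := @Ordinal 8 4 isT.
Definition o5 : 'I_8 := @Ordinal 8 5 isT.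
Definition o6 : 'I_8 := @Ordinal 8 6 isT.
Definition o7 : 'I_8 := @Ordinal 8 7 isT.

Lemma big_ord8 (U : nmodType) (F : 'I_8 -> U) :
  \sum_(i < 8) F i = F o0 + F o1 + F o2 + F o3 + F o4 + F o5 + F o6 + F o7.
Proof.
rewrite !big_ord_recr big_ord0 /= add0r.
by repeat congr (_ + _); congr F; apply: val_inj.
Qed.

Lemma ord8_ind (P : 'I_8 -> Prop) :
  P o0 -> P o1 -> P o2 -> P o3 -> P o4 -> P o5 -> P o6 -> P o7 -> forall i, P i.
Proof.
move=> P0 P1 P2 P3 P4 P5 P6 P7 [[|[|[|[|[|[|[|[|i]]]]]]]] lti] //.
- by rewrite (_ : Ordinal lti = o0) //; apply: val_inj.
- by rewrite (_ : Ordinal lti = o1) //; apply: val_inj.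
- by rewrite (_ : Ordinal lti = o2) //; apply: val_inj.
- by rewrite (_ : Ordinal lti = o3) //; apply: val_inj.
- by rewrite (_ : Ordinal lti = o4) //; apply: val_inj.
- by rewrite (_ : Ordinal lti = o5) //; apply: val_inj.
- by rewrite (_ : Ordinal lti = o6) //; apply: val_inj.
- by rewrite (_ : Ordinal lti = o7) //; apply: val_inj.
Qed.

Lemma obasisE :
  (obasis o0 = Oct (Quat 1 0 0 0) (Quat 0 0 0 0) :> oct R) *
  (obasis o1 = Oct (Quat 0 1 0 0) (Quat 0 0 0 0) :> oct R) *
  (obasis o2 = Oct (Quat 0 0 1 0) (Quat 0 0 0 0) :> oct R) *
  (obasis o3 = Oct (Quat 0 0 0 1) (Quat 0 0 0 0) :> oct R) *
  (obasis o4 = Oct (Quat 0 0 0 0) (Quat 1 0 0 0) :> oct R) *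
  (obasis o5 = Oct (Quat 0 0 0 0) (Quat 0 1 0 0) :> oct R) *
  (obasis o6 = Oct (Quat 0 0 0 0) (Quat 0 0 1 0) :> oct R) *
  (obasis o7 = Oct (Quat 0 0 0 0) (Quat 0 0 0 1) :> oct R).
Proof. by do !split. Qed.

Lemma ocoordE x :
  (ocoord x o0 = qr (ofst x)) * (ocoord x o1 = qi (ofst x)) *
  (ocoord x o2 = qj (ofst x)) * (ocoord x o3 = qk (ofst x)) *
  (ocoord x o4 = qr (osnd x)) * (ocoord x o5 = qi (osnd x)) *
  (ocoord x o6 = qj (osnd x)) * (ocoord x o7 = qk (osnd x)).
Proof. by do !split. Qed.

Lemma oct_basis_decomp x : x =
  oadd (oscale (ocoord x o0) (obasis o0)) (oadd (oscale (ocoord x o1) (obasis o1))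
  (oadd (oscale (ocoord x o2) (obasis o2)) (oadd (oscale (ocoord x o3) (obasis o3))
  (oadd (oscale (ocoord x o4) (obasis o4)) (oadd (oscale (ocoord x o5) (obasis o5))
  (oadd (oscale (ocoord x o6) (obasis o6)) (oscale (ocoord x o7) (obasis o7)))))))).
Proof. rewrite !ocoordE !obasisE; oct_ring. Qed.

Lemma oct_linear_expand (U : lmodType R) (F : oct R -> U) :
  (forall p q, F (oadd p q) = F p + F q) -> (forall a p, F (oscale a p) = a *: F p) ->
  forall x, F x = \sum_(i < 8) ocoord x i *: F (obasis i).
Proof.
by move=> FD FZ x; rewrite big_ord8 {1}(oct_basis_decomp x) !FD !FZ !addrA.
Qed.

Lemma oRe_basis i : oRe (obasis i) = (i == o0)%:R.
Proof. by elim/ord8_ind: i; rewrite !obasisE; oct_coords. Qed.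

Lemma oRe_basis_conj i j : oRe (omul (obasis i) (oconj (obasis j))) = (i == j)%:R.
Proof. elim/ord8_ind: i; elim/ord8_ind: j; rewrite !obasisE /=; oct_coords; ring. Qed.

Lemma oconj_basis0 : oconj (obasis o0) = oone :> oct R.
Proof. rewrite obasisE; oct_ring. Qed.

Lemma oscale_oRe_basis i p :
  oscale (oRe (omul (obasis i) p)) (oconj (obasis i)) = oscale (ocoord p i) (obasis i).
Proof. elim/ord8_ind: i; rewrite !obasisE ?ocoordE; oct_ring. Qed.

Lemma sum_basis_conjugation x :
  oadd (oscale 4 x)
  (oadd (omul (obasis o0) (omul x (oconj (obasis o0))))
  (oadd (omul (obasis o1) (omul x (oconj (obasis o1))))
  (oadd (omul (obasis o2) (omul x (oconj (obasis o2))))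
  (oadd (omul (obasis o3) (omul x (oconj (obasis o3))))
  (oadd (omul (obasis o4) (omul x (oconj (obasis o4))))
  (oadd (omul (obasis o5) (omul x (oconj (obasis o5))))
  (oadd (omul (obasis o6) (omul x (oconj (obasis o6))))
        (omul (obasis o7) (omul x (oconj (obasis o7)))))))))))
  = oscale (12 * oRe x) oone.
Proof. rewrite !obasisE; oct_ring. Qed.

Lemma onorm_basis i : onorm (obasis i : oct R) = 1.
Proof.
rewrite /onorm (_ : onorm2 (obasis i) = 1) ?sqrtr1 //.
by elim/ord8_ind: i; rewrite !obasisE; oct_coords; ring.
Qed.

Lemma onorm_conj_basis i : onorm (oconj (obasis i : oct R)) = 1.
Proof.
rewrite /onorm (_ : onorm2 (oconj (obasis i)) = 1) ?sqrtr1 //.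
by elim/ord8_ind: i; rewrite !obasisE; oct_coords; ring.
Qed.

Definition oplane (s : oct R) a b := oadd (oscale a oone) (oscale b s).

Lemma oplaneM s a b c d :
  omul (oplane s a b) (oplane s c d) =
  oplane s (a * c - b * d * onorm2 s) (a * d + b * c + 2 * oRe s * b * d).
Proof. rewrite /oplane; oct_ring. Qed.

Lemma oplane_one s : oone = oplane s 1 0.
Proof. rewrite /oplane; oct_ring. Qed.

Lemma oplane_id s : s = oplane s 0 1.
Proof. rewrite /oplane; oct_ring. Qed.

Lemma oplane_conj s c : oscale c (oconj s) = oplane s (2 * oRe s * c) (- c).
Proof. rewrite /oplane; oct_ring. Qed.

End OctonionAlgebra.

Arguments ozero {R}.

Section RealLinear.
Variables (R : pzRingType) (U W : lmodType R) (f : U -> W).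
Hypothesis f_linear : linear f.

Let F : {linear U -> W} := HB.pack f (GRing.isLinear.Build R U W *:%R f f_linear).

Lemma lin0 : f 0 = 0. Proof. exact: linear0 F. Qed.
Lemma linD x y : f (x + y) = f x + f y. Proof. exact: linearD F x y. Qed.
Lemma linZ a x : f (a *: x) = a *: f x. Proof. exact: linearZZ F a x. Qed.
Lemma linB x y : f (x - y) = f x - f y. Proof. exact: linearB F x y. Qed.
Lemma lin_sum I r (P : pred I) (G : I -> U) :
  f (\sum_(i <- r | P i) G i) = \sum_(i <- r | P i) f (G i).
Proof. by move: (linear_sum F r P G). Qed.

End RealLinear.

Lemma linear_iter (R : pzRingType) (U : lmodType R) (f : U -> U) n :
  linear f -> linear (iter n f).
Proof. by move=> f_linear a x y; elim: n => [//|n IH]; rewrite !iterS IH f_linear. Qed.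

Section NormEstimates.
Variable R : realType.

Lemma norm_iter_le (V : normedModType R) (f : V -> V) (c : R) n x :
  0 <= c -> (forall y, `|f y| <= c * `|y|) -> `|iter n f x| <= c ^+ n * `|x|.
Proof.
move=> c_ge0 f_le; elim: n => [|n IH]; first by rewrite expr0 mul1r.
by rewrite iterS exprS -mulrA; apply: le_trans (f_le _) (ler_wpM2l c_ge0 IH).
Qed.

Lemma ler_sum_const n (F : 'I_n -> R) c :
  (forall i, F i <= c) -> \sum_(i < n) F i <= n%:R * c.
Proof.
move=> F_le; apply: le_trans (ler_sum _ (fun i _ => F_le i)) _.
by rewrite sumr_const card_ord mulr_natl.
Qed.

Lemma geometric_sum_le (k : R) N : 0 <= k -> k < 1 -> \sum_(i < N) k ^+ i <= (1 - k)^-1.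
Proof.
move=> k_ge0 k_lt1.
have sumE : (1 - k) * \sum_(i < N) k ^+ i = 1 - k ^+ N.
  elim: N => [|N IH]; first by rewrite big_ord0 mulr0 expr0 subrr.
  by rewrite big_ord_recr /= mulrDr IH exprS; ring.
have k1_gt0 : 0 < 1 - k by rewrite subr_gt0.
rewrite -[X in X <= _](mulKf (lt0r_neq0 k1_gt0)) sumE.
apply: ler_piMr; first by rewrite invr_ge0 ltW.
by rewrite lerBlDr lerDl exprn_ge0.
Qed.

Lemma cvg_geometric0 (c k : R) : 0 <= k -> k < 1 -> (fun n => c * k ^+ n) @ \oo --> 0.
Proof. by move=> k_ge0 k_lt1; apply: cvg_geometric; rewrite ger0_norm. Qed.

Lemma cvgn_dist_le (V : normedModType R) (u : nat -> V) (l : V) (e : nat -> R) :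
  e @ \oo --> 0 -> (forall n, `|u n - l| <= e n) -> u @ \oo --> l.
Proof.
move=> e0 u_le; apply/cvgrPdist_le => eps eps_gt0.
move/cvgrPdist_le: e0 => /(_ eps eps_gt0); apply: filterS => n.
rewrite sub0r normrN distrC => e_le; apply: le_trans (u_le n) _.
exact: le_trans (ler_norm _) e_le.
Qed.

Lemma eq_dist_le (V : normedModType R) (x y : V) (e : nat -> R) :
  e @ \oo --> 0 -> (forall n, `|x - y| <= e n) -> x = y.
Proof.
move=> e0 x_le; have x_cvg := @cvgn_dist_le V (fun=> x) y e e0 x_le.
exact: cvg_unique _ (cvg_cst x) x_cvg.
Qed.

End NormEstimates.

Section Neumann.
Variables (R : realType) (V : completeNormedModType R) (K : V -> V) (k : R).
Hypotheses (K_linear : linear K) (K_le : forall x, `|K x| <= k * `|x|).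
Hypotheses (k_ge0 : 0 <= k) (k_lt1 : k < 1).

Let partial y N := \sum_(i < N) iter i K y.

Definition neumann y := limn (series (fun i => iter i K y)).

Lemma neumann_cvg y : partial y @ \oo --> neumann y.
Proof.
have -> : partial y = series (fun i => iter i K y).
  by apply/funext => N; rewrite /partial /series /= big_mkord.
apply: normed_cvg.
apply: (@series_le_cvg R _ (geometric `|y| k)) => [n|n|n|].
- exact: normr_ge0.
- by rewrite /geometric /= mulr_ge0 ?exprn_ge0.
- by rewrite /geometric /= mulrC norm_iter_le.
- by apply: is_cvg_geometric_series; rewrite ger0_norm.
Qed.

Lemma neumann_tail y N : `|neumann y - partial y N| <= k ^+ N * (1 - k)^-1 * `|y|.
Proof.
have diff_cvg : (fun M => partial y M - partial y N) @ \oo --> neumann y - partial y N.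
  by apply: cvgB; [exact: neumann_cvg | exact: cvg_cst].
rewrite -(cvg_lim _ diff_cvg) // -lim_norm; last exact: cvgP diff_cvg.
apply: limr_le; first by apply: is_cvg_norm; exact: cvgP diff_cvg.
near=> M; have /subnKC <- : (N <= M)%N by near: M; exact: nbhs_infty_ge.
rewrite /partial big_split_ord /= addrAC subrr add0r.
apply: le_trans (ler_norm_sum _ _ _) _.
apply: (@le_trans _ _ (\sum_(i < M - N) k ^+ i * (k ^+ N * `|y|))).
  apply: ler_sum => i _; rewrite addnC iterD.
  apply: le_trans (norm_iter_le _ _ k_ge0 K_le) _.
  by rewrite ler_wpM2l ?exprn_ge0 ?norm_iter_le.
rewrite -mulr_suml mulrA ler_wpM2r // mulrC ler_wpM2l ?exprn_ge0 //.
exact: geometric_sum_le.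
Unshelve. all: by end_near.
Qed.

Lemma neumann_le y : `|neumann y| <= (1 - k)^-1 * `|y|.
Proof. by have := neumann_tail y 0; rewrite /partial big_ord0 subr0 expr0 mul1r. Qed.

Let partial_linear a x y N : partial (a *: x + y) N = a *: partial x N + partial y N.
Proof.
rewrite /partial scaler_sumr -big_split /=.
by apply: eq_bigr => i _; rewrite (linear_iter i K_linear).
Qed.

Lemma neumann_linear : linear neumann.
Proof.
move=> a x y.
pose D := (1 - k)^-1 * (`|a *: x + y| + `|a| * `|x| + `|y|).
apply: (eq_dist_le (e := fun N => D * k ^+ N)) => [|N]; first exact: cvg_geometric0.
have tail z : `|partial z N - neumann z| <= (1 - k)^-1 * `|z| * k ^+ N.
  by rewrite distrC mulrC mulrA; exact: neumann_tail.
apply: le_trans (ler_distD (partial (a *: x + y) N) _ _) _.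
rewrite /D !mulrDr !mulrDl -addrA; apply: lerD; first by rewrite distrC; exact: tail.
rewrite partial_linear opprD addrACA -scalerBr.
apply: le_trans (ler_normD _ _) _; apply: lerD; last exact: tail.
rewrite normrZ (_ : _ * (`|a| * `|x|) * _ = `|a| * ((1 - k)^-1 * `|x| * k ^+ N)).
  by rewrite ler_wpM2l ?tail.
by ring.
Qed.

Lemma neumann_subK y : neumann (y - K y) = y.
Proof.
apply: (eq_dist_le (e := fun N => ((1 - k)^-1 * `|y - K y| + `|y|) * k ^+ N)) => [|N].
  exact: cvg_geometric0.
have partialE : partial (y - K y) N = y - iter N K y.
  elim: N => [|N IH]; first by rewrite /partial big_ord0 subrr.
  rewrite /partial big_ord_recr /= -/(partial _ _) IH (linB (linear_iter N K_linear)).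
  by rewrite -iterSr addrA subrK.
apply: le_trans (ler_distD (partial (y - K y) N) _ _) _.
rewrite mulrDl; apply: lerD.
  by rewrite mulrC mulrA; exact: neumann_tail.
by rewrite partialE addrAC subrr add0r normrN mulrC; exact: norm_iter_le.
Qed.

Lemma subK_neumann y : neumann y - K (neumann y) = y.
Proof.
apply: (eq_dist_le (e := fun N => ((1 + k) * ((1 - k)^-1 * `|y|) + `|y|) * k ^+ N)).
  exact: cvg_geometric0.
move=> N; have partialE : partial y N - K (partial y N) = y - iter N K y.
  elim: N => [|N IH]; first by rewrite /partial big_ord0 (lin0 K_linear) /= !subrr.
  rewrite /partial big_ord_recr /= -/(partial _ _) (linD K_linear) opprD addrACA IH -iterS.
  by rewrite addrA subrK.
apply: le_trans (ler_distD (partial y N - K (partial y N)) _ _) _.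
rewrite mulrDl; apply: lerD; last first.
  by rewrite partialE addrAC subrr add0r normrN mulrC; exact: norm_iter_le.
rewrite opprD opprK addrACA [- K _ + _]addrC -opprB -(linB K_linear).
set d := partial y N - neumann y.
have d_le : `|d| <= (1 - k)^-1 * `|y| * k ^+ N.
  by rewrite /d distrC mulrC mulrA; exact: neumann_tail.
rewrite (_ : (1 + k) * _ * _ =
    (1 - k)^-1 * `|y| * k ^+ N + k * ((1 - k)^-1 * `|y| * k ^+ N)).
  apply: le_trans (ler_normD _ _) _; rewrite normrN lerD //.
  exact: le_trans (K_le d) (ler_wpM2l k_ge0 d_le).
by ring.
Qed.

End Neumann.

Section OctonionBimodule.
Variables (R : realType) (V : completeNormedModType R).
Variables (lm : oct R -> V -> V) (rm : V -> oct R -> V).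
Hypothesis bimod : Banach_Obimodule lm rm.
Implicit Types (p q : oct R) (a : R) (x y m : V).

Local Notation ReV := (Defs.ReV lm rm).
Local Notation comp := (Defs.comp lm rm).
Local Notation real := (is_real_elt lm rm).

Lemma lm_linear p : linear (lm p).
Proof. by case: bimod => lm_lin _ a x y; exact: lm_lin. Qed.

Lemma rm_linear p : linear (rm^~ p).
Proof. by case: bimod => _ [rm_lin _] a x y; exact: rm_lin. Qed.

Lemma lm_oadd_oscale p q a x : lm (oadd (oscale a p) q) x = a *: lm p x + lm q x.
Proof. by case: bimod => _ [_ []]. Qed.

Lemma rm_oadd_oscale p q a x : rm x (oadd (oscale a p) q) = a *: rm x p + rm x q.
Proof. by case: bimod => _ [_ [_ []]]. Qed.

Lemma lm1 x : lm oone x = x.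
Proof. by case: bimod => _ [_ [_ [_ [/(_ x) []]]]]. Qed.

Lemma rm1 x : rm x oone = x.
Proof. by case: bimod => _ [_ [_ [_ [/(_ x) []]]]]. Qed.

Lemma associator_cycle p q x :
  [/\ assocL lm p q x = assocM lm rm q x p, assocM lm rm q x p = assocR rm x p q
    & assocR rm x p q = - assocL lm q p x].
Proof. by case: bimod => _ [_ [_ [_ [_ [/(_ p q x) [? [? ?]] _]]]]]. Qed.

Lemma decomposition_exists_unique x :
  exists c, decomposes lm rm x c /\
    forall c', decomposes lm rm x c' -> forall i, c' i = c i.
Proof. by case: bimod => _ [_ [_ [_ [_ [_ []]]]]]. Qed.

Lemma norm_lm p x : `|lm p x| = onorm p * `|x|.
Proof. by case: bimod => _ [_ [_ [_ [_ [_ [_ /(_ p x) []]]]]]]. Qed.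

Lemma norm_rm p x : `|rm x p| = onorm p * `|x|.
Proof. by case: bimod => _ [_ [_ [_ [_ [_ [_ /(_ p x) []]]]]]]. Qed.

Definition lmZ p := linZ (lm_linear p).
Definition lm_sum p := lin_sum (lm_linear p).
Definition rm0 p := lin0 (rm_linear p).
Definition rmD p := linD (rm_linear p).
Definition rmZ p := linZ (rm_linear p).
Definition rmB p := linB (rm_linear p).
Definition rm_sum p := lin_sum (rm_linear p).

Lemma lm_ozero x : lm ozero x = 0.
Proof. by apply/normr0_eq0; rewrite norm_lm onorm0 mul0r. Qed.

Lemma rm_ozero x : rm x ozero = 0.
Proof. by apply/normr0_eq0; rewrite norm_rm onorm0 mul0r. Qed.

Lemma lm_oadd p q x : lm (oadd p q) x = lm p x + lm q x.
Proof. by have := lm_oadd_oscale p q 1 x; rewrite oscale1 scale1r. Qed.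

Lemma lm_oscale a p x : lm (oscale a p) x = a *: lm p x.
Proof. by have := lm_oadd_oscale p ozero a x; rewrite oaddo0 lm_ozero addr0. Qed.

Lemma rm_oadd p q x : rm x (oadd p q) = rm x p + rm x q.
Proof. by have := rm_oadd_oscale p q 1 x; rewrite oscale1 scale1r. Qed.

Lemma rm_oscale a p x : rm x (oscale a p) = a *: rm x p.
Proof. by have := rm_oadd_oscale p ozero a x; rewrite oaddo0 rm_ozero addr0. Qed.

Lemma lm_expand p x : lm p x = \sum_(i < 8) ocoord p i *: lm (obasis i) x.
Proof.
exact: (oct_linear_expand (F := lm^~ x)
  (fun p q => lm_oadd p q x) (fun a p => lm_oscale a p x)).
Qed.

Lemma rm_expand p x : rm x p = \sum_(i < 8) ocoord p i *: rm x (obasis i).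
Proof.
exact: (oct_linear_expand (F := rm x)
  (fun p q => rm_oadd p q x) (fun a p => rm_oscale a p x)).
Qed.

Lemma assocR_skew x p q : assocR rm x p q = - assocR rm x q p.
Proof.
have [_ _ ->] := associator_cycle p q x.
by have [-> -> _] := associator_cycle q p x.
Qed.

Lemma assocR_alt x p : assocR rm x p p = 0.
Proof.
have : (2 : R) *: assocR rm x p p = 0 by rewrite scaler_nat mulr2n {1}assocR_skew addNr.
by move/eqP; rewrite scaler_eq0 pnatr_eq0 => /eqP.
Qed.

Lemma rm_skew x p q : rm (rm x p) q = rm x (omul p q) + rm x (omul q p) - rm (rm x q) p.
Proof.
have /eqP := assocR_skew x p q; rewrite /assocR subr_eq => /eqP ->.
by rewrite opprB addrC addrA.
Qed.

Lemma real_rmE m p : real m -> rm m p = lm p m.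
Proof. by case=> ->. Qed.

Lemma real_lmA m p q : real m -> lm p (lm q m) = lm (omul p q) m.
Proof. by case=> _ /(_ p q) /eqP; rewrite subr_eq0 => /eqP. Qed.

Lemma real_rm_lm m p q : real m -> rm (lm p m) q = lm (omul p q) m.
Proof.
move=> m_real; have [assocLM _ _] := associator_cycle q p m.
have : assocM lm rm p m q = 0 by rewrite -assocLM; case: m_real => _ ->.
by move/eqP; rewrite subr_eq0 => /eqP ->; rewrite real_rmE // real_lmA.
Qed.

Lemma real_rmA m p q : real m -> rm (rm m p) q = rm m (omul p q).
Proof.
by move=> m_real; rewrite (real_rmE p m_real) real_rm_lm // real_rmE.
Qed.

Lemma real_lin a x y : real x -> real y -> real (a *: x + y).
Proof.
move=> x_real y_real; split=> [p | p q].
  by rewrite (lm_linear p) (rm_linear p) !real_rmE.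
by rewrite /assocL !(lm_linear _) !real_lmA // subrr.
Qed.

Lemma real0 : real 0.
Proof. by split=> [p | p q]; rewrite /assocL ?rm0 !(lin0 (lm_linear _)) ?subrr. Qed.

Lemma realZ a x : real x -> real (a *: x).
Proof. by move=> x_real; rewrite -[_ *: _]addr0; exact: real_lin real0. Qed.

Lemma real_sum I r (P : pred I) (F : I -> V) :
  (forall i, real (F i)) -> real (\sum_(i <- r | P i) F i).
Proof.
move=> F_real; elim/big_ind: _ => //; first exact: real0.
by move=> x y x_real y_real; rewrite -[x]scale1r; exact: real_lin.
Qed.

Lemma comp_decomposes x : decomposes lm rm x (comp x).
Proof.
rewrite /Defs.comp; case: pselect => [ex | nex]; first exact: projT2 (cid ex).
by have [c [dc _]] := decomposition_exists_unique x; case: nex; exists c.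
Qed.

Lemma comp_unique x c : decomposes lm rm x c -> forall i, comp x i = c i.
Proof.
move=> dc i; have [c0 [_ c0_unique]] := decomposition_exists_unique x.
by rewrite (c0_unique _ (comp_decomposes x)) (c0_unique _ dc).
Qed.

Lemma comp_real x i : real (comp x i).
Proof. by case: (comp_decomposes x). Qed.

Local Hint Resolve comp_real : core.

Lemma comp_sum x : x = \sum_(i < 8) lm (obasis i) (comp x i).
Proof. by case: (comp_decomposes x). Qed.

Lemma comp_lm p m i : real m -> comp (lm p m) i = ocoord p i *: m.
Proof.
move=> m_real; apply: (@comp_unique _ (fun j => ocoord p j *: m)).
split=> [j|]; first exact: realZ.
by rewrite lm_expand; apply: eq_bigr => j _; rewrite lmZ.
Qed.

Lemma comp_linear i : linear (comp^~ i).
Proof.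
move=> a x y; apply: (@comp_unique _ (fun j => a *: comp x j + comp y j)).
split=> [j|]; first exact: real_lin.
rewrite {1}(comp_sum x) {1}(comp_sum y) scaler_sumr -big_split /=.
by apply: eq_bigr => j _; rewrite (lm_linear _).
Qed.

Lemma ReV_linear : linear ReV.
Proof. exact: comp_linear. Qed.

Definition ReD := linD ReV_linear.
Definition ReB := linB ReV_linear.
Definition Re_sum := lin_sum ReV_linear.

Lemma Re_lm p m : real m -> ReV (lm p m) = oRe p *: m.
Proof. exact: comp_lm. Qed.

Lemma Re_real_rm m p : real m -> ReV (rm m p) = oRe p *: m.
Proof. by move=> m_real; rewrite real_rmE // Re_lm. Qed.

Lemma Re_lm_rm p x : ReV (lm p x) = ReV (rm x p).
Proof.
rewrite (comp_sum x) lm_sum rm_sum !Re_sum; apply: eq_bigr => i _.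
by rewrite real_lmA // real_rm_lm // !Re_lm // oRe_mulC.
Qed.

Lemma Re_rmA x p q : ReV (rm (rm x p) q) = ReV (rm x (omul p q)).
Proof.
rewrite (comp_sum x) !rm_sum !Re_sum; apply: eq_bigr => i _.
by rewrite !real_rm_lm // !Re_lm // oRe_mulA.
Qed.

Lemma Re_rm_lm q x p : ReV (rm (lm q x) p) = ReV (lm q (rm x p)).
Proof.
have [_ assocMR _] := associator_cycle p q x.
have : ReV (assocM lm rm q x p) = 0 by rewrite assocMR /assocR ReB Re_rmA subrr.
by rewrite /assocM ReB => /eqP; rewrite subr_eq0 => /eqP.
Qed.

Lemma comp_Re x j : comp x j = ReV (rm x (oconj (obasis j))).
Proof.
rewrite {2}(comp_sum x) rm_sum Re_sum.
under eq_bigr do rewrite real_rm_lm // Re_lm // oRe_basis_conj.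
rewrite (bigD1 j) //= eqxx scale1r big1 ?addr0 // => i /negbTE ->.
by rewrite scale0r.
Qed.

Lemma Re_sum_basis x : x = \sum_(j < 8) rm (ReV (rm x (oconj (obasis j)))) (obasis j).
Proof. by under eq_bigr do rewrite -comp_Re real_rmE //; exact: comp_sum. Qed.

Lemma comp_rm x p j :
  comp (rm x p) j = \sum_(i < 8) ocoord (omul (obasis i) p) j *: comp x i.
Proof.
apply: (@comp_unique _ (fun j => \sum_(i < 8) ocoord (omul (obasis i) p) j *: comp x i)).
split=> [k|]; first by apply: real_sum => i; exact: realZ.
rewrite {1}(comp_sum x) rm_sum.
under eq_bigr do rewrite real_rm_lm // lm_expand.
rewrite exchange_big /=; apply: eq_bigr => k _.
by rewrite lm_sum; apply: eq_bigr => i _; rewrite lmZ.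
Qed.

Lemma Re_identity x :
  (12 : R) *: ReV x = 4 *: x + \sum_(k < 8) lm (obasis k) (rm x (oconj (obasis k))).
Proof.
have real_case p m : real m -> 4 *: lm p m +
    \sum_(k < 8) lm (obasis k) (rm (lm p m) (oconj (obasis k))) = (12 * oRe p) *: m.
  move=> m_real; under eq_bigr do rewrite real_rm_lm // real_lmA //.
  have := congr1 (lm^~ m) (sum_basis_conjugation p).
  by rewrite !lm_oadd !lm_oscale lm1 big_ord8 !addrA => <-.
have sumE : \sum_(k < 8) lm (obasis k) (rm x (oconj (obasis k))) = \sum_(i < 8)
    \sum_(k < 8) lm (obasis k) (rm (lm (obasis i) (comp x i)) (oconj (obasis k))).
  rewrite {1}(comp_sum x); under eq_bigr do rewrite rm_sum lm_sum.
  exact: exchange_big.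
rewrite sumE {1 2}(comp_sum x) Re_sum !scaler_sumr -big_split /=.
by apply: eq_bigr => i _; rewrite real_case // Re_lm // scalerA.
Qed.

Lemma Re_le x : `|ReV x| <= `|x|.
Proof.
have : `|(12 : R) *: ReV x| <= 12 * `|x|.
  rewrite Re_identity; apply: le_trans (ler_normD _ _) _.
  apply: le_trans (lerD (lexx _) (ler_norm_sum _ _ _)) _.
  under eq_bigr do rewrite norm_lm norm_rm onorm_basis onorm_conj_basis !mul1r.
  by rewrite sumr_const card_ord normrZ ger0_norm // -mulr_natr; lra.
by rewrite normrZ ger0_norm // ler_pM2l.
Qed.

Lemma comp_le x i : `|comp x i| <= `|x|.
Proof.
by rewrite comp_Re; apply: le_trans (Re_le _) _; rewrite norm_rm onorm_conj_basis mul1r.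
Qed.

Local Notation paralinear := (right_paralinear lm rm).

Definition real_rm_commute (f : V -> V) := forall m p, real m -> f (rm m p) = rm (f m) p.

Lemma paralinearE f p x : paralinear f -> ReV (rm (f x) p) = ReV (f (rm x p)).
Proof. by move=> f_para; apply/eqP; rewrite -subr_eq0 -ReB; apply/eqP; exact: f_para. Qed.

Lemma paralinear_commute f : linear f -> paralinear f -> real_rm_commute f.
Proof.
move=> f_linear f_para m p m_real.
apply/eqP; rewrite eq_sym -subr_eq0; apply/eqP.
rewrite (Re_sum_basis (rm (f m) p - f (rm m p))) big1 // => j _.
rewrite rmB ReB Re_rmA !paralinearE // real_rmA // subrr.
exact: rm0.
Qed.

Lemma real_rm_commute_expand g : linear g -> real_rm_commute g ->
  forall x, g x = \sum_(i < 8) rm (g (comp x i)) (obasis i).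
Proof.
move=> g_linear g_comm x; rewrite {1}(comp_sum x) (lin_sum g_linear).
by apply: eq_bigr => i _; rewrite -real_rmE // g_comm.
Qed.

Lemma rodot_real f q m p : real_rm_commute f -> real m ->
  rodot lm rm f q (rm m p) = rm (rm (f m) q) p.
Proof.
move=> f_comm m_real; rewrite /rodot /Bp.
have -> : lm q (rm m p) = rm m (omul q p) by rewrite !real_rmE // real_lmA.
rewrite real_rmA // !f_comm //.
have := assocR_skew (f m) p q; rewrite /assocR => ->.
by rewrite opprK addrC subrK.
Qed.

Lemma rodot_linear f q : linear f -> linear (rodot lm rm f q).
Proof.
move=> f_linear a x y; rewrite /rodot /Bp (lm_linear q) (rm_linear q) !f_linear.
rewrite (rm_linear q) !scalerBr addrACA -opprD; congr (_ - _).
by rewrite addrACA -opprD.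
Qed.

Lemma rodotE f q x : linear f -> real_rm_commute f ->
  rodot lm rm f q x = \sum_(i < 8) rm (rm (f (comp x i)) q) (obasis i).
Proof.
move=> f_linear f_comm.
have rodot_comm : real_rm_commute (rodot lm rm f q).
  by move=> m p m_real; rewrite !rodot_real // -{2}(rm1 m) rodot_real // rm1.
rewrite (real_rm_commute_expand (rodot_linear q f_linear) rodot_comm).
by apply: eq_bigr => i _; rewrite -{1}(rm1 (comp x i)) rodot_real // rm1.
Qed.

Lemma lodot_Re f q x p : linear f -> paralinear f ->
  ReV (rm (lodot lm rm q f x) p) = ReV (f (rm (rm x p) q)).
Proof.
move=> f_linear f_para; rewrite /lodot /Bp rmD rmB ReD ReB.
rewrite Re_rm_lm Re_lm_rm !Re_rmA !paralinearE // (rm_skew x p q).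
by rewrite (linB f_linear) (linD f_linear) ReB ReD addrA.
Qed.

Lemma ext_linear h : linear h -> linear (Defs.ext lm rm h).
Proof.
move=> h_linear a x y; rewrite /Defs.ext scaler_sumr -big_split /=.
by apply: eq_bigr => i _; rewrite comp_linear h_linear (rm_linear _).
Qed.

Lemma ext_le h c : 0 <= c -> (forall x, `|h x| <= c * `|x|) ->
  forall x, `|Defs.ext lm rm h x| <= 8 * c * `|x|.
Proof.
move=> c_ge0 h_le x; rewrite /Defs.ext -mulrA.
apply: le_trans (ler_norm_sum _ _ _) (ler_sum_const _) => i.
rewrite norm_rm onorm_basis mul1r; apply: le_trans (h_le _) _.
by rewrite ler_wpM2l ?comp_le.
Qed.

Lemma ext_paralinear h : linear h -> paralinear (Defs.ext lm rm h).
Proof.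
move=> h_linear p x; rewrite /Bp ReB; apply/eqP; rewrite subr_eq0; apply/eqP.
have -> : Defs.ext lm rm h (rm x p) = \sum_(i < 8) rm (h (comp x i)) (omul (obasis i) p).
  rewrite /Defs.ext; under eq_bigr do rewrite comp_rm (lin_sum h_linear) rm_sum.
  rewrite exchange_big /=; apply: eq_bigr => i _.
  by rewrite rm_expand; apply: eq_bigr => j _; rewrite (linZ h_linear) rmZ.
by rewrite /Defs.ext rm_sum !Re_sum; apply: eq_bigr => i _; exact: Re_rmA.
Qed.

Lemma lif_linear g : linear g -> linear (Defs.lif rm g).
Proof.
move=> g_linear a x y; rewrite /Defs.lif scaler_sumr -big_split /=.
by apply: eq_bigr => i _; rewrite (rm_linear _) g_linear (rm_linear _).
Qed.

Lemma lif_le g c : 0 <= c -> (forall x, `|g x| <= c * `|x|) ->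
  forall x, `|Defs.lif rm g x| <= 8 * c * `|x|.
Proof.
move=> c_ge0 g_le x; rewrite /Defs.lif -mulrA.
apply: le_trans (ler_norm_sum _ _ _) (ler_sum_const _) => i.
rewrite norm_rm onorm_basis mul1r; apply: le_trans (g_le _) _.
by rewrite norm_rm onorm_conj_basis mul1r.
Qed.

Lemma Re_lif g x : (forall y, real (g y)) -> ReV (Defs.lif rm g x) = g x.
Proof.
move=> g_real; rewrite /Defs.lif Re_sum.
under eq_bigr do rewrite Re_real_rm // oRe_basis.
rewrite (bigD1 o0) //= scale1r big1 ?addr0 => [|i /negbTE ->]; last by rewrite scale0r.
by rewrite oconj_basis0 rm1.
Qed.

Lemma lif_paralinear g : linear g -> (forall y, real (g y)) -> paralinear (Defs.lif rm g).
Proof.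
move=> g_linear g_real p x; rewrite /Bp ReB Re_lif // /Defs.lif rm_sum Re_sum.
under eq_bigr do rewrite Re_rmA Re_real_rm // -(linZ g_linear) -rm_oscale
  oscale_oRe_basis rm_oscale.
by rewrite -(lin_sum g_linear) -rm_expand subrr.
Qed.

Lemma assocR_oadd_oscalel x p q r a :
  assocR rm x (oadd (oscale a p) q) r = a *: assocR rm x p r + assocR rm x q r.
Proof.
rewrite /assocR rm_oadd_oscale (rm_linear _) omulDl rm_oadd_oscale.
by rewrite scalerBr opprD addrACA.
Qed.

Lemma assocR_oadd_oscaler x p q r a :
  assocR rm x r (oadd (oscale a p) q) = a *: assocR rm x r p + assocR rm x r q.
Proof.
by rewrite /assocR rm_oadd_oscale omulDr rm_oadd_oscale scalerBr opprD addrACA.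
Qed.

Lemma assocR_oplane s x a b c d : assocR rm x (oplane s a b) (oplane s c d) = 0.
Proof.
have assocR1l r : assocR rm x oone r = 0 by rewrite /assocR rm1 omul1o subrr.
have assocR1r r : assocR rm x r oone = 0 by rewrite /assocR rm1 omulo1 subrr.
have assocR0l r : assocR rm x ozero r = 0.
  by rewrite /assocR rm_ozero rm0 omul0o rm_ozero subrr.
have assocR0r r : assocR rm x r ozero = 0.
  by rewrite /assocR !rm_ozero omulo0 rm_ozero subrr.
rewrite /oplane -[oscale b s]oaddo0 -[oscale d s]oaddo0.
rewrite !assocR_oadd_oscalel !assocR_oadd_oscaler.
by rewrite !assocR1l !assocR1r !assocR0l !assocR0r assocR_alt !(scaler0, addr0).
Qed.

Lemma rm_oplaneA s x a b c d :
  rm (rm x (oplane s a b)) (oplane s c d) = rm x (omul (oplane s a b) (oplane s c d)).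
Proof. by apply/eqP; rewrite -subr_eq0; apply/eqP; exact: assocR_oplane. Qed.

Section InversePowers.
Variable s : oct R.
Hypothesis s_neq0 : onorm2 s != 0.
Local Notation spow n := (oexp (octinv s) n).

Lemma spow_oplane n : exists a b, spow n = oplane s a b.
Proof.
elim: n => [|n [a [b IH]]]; first by exists 1, 0; rewrite -oplane_one.
by rewrite /oexp iterS -/(oexp _ _) IH /octinv oplane_conj oplaneM; do 2!eexists.
Qed.

Lemma omul_spowS n : omul s (spow n.+1) = spow n.
Proof.
have [a [b spowE]] := spow_oplane n.
rewrite /oexp iterS -/(oexp _ _) spowE /octinv oplane_conj oplaneM {1}(oplane_id s).
by rewrite oplaneM; congr (oplane s _ _); field.
Qed.

Lemma omul_spowSl n : omul (spow n.+1) s = spow n.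
Proof.
have [a [b spowE]] := spow_oplane n.
rewrite /oexp iterS -/(oexp _ _) spowE /octinv oplane_conj oplaneM.
by rewrite [X in omul _ X](oplane_id s) oplaneM; congr (oplane s _ _); field.
Qed.

Lemma rm_s_spowS x n : rm (rm x s) (spow n.+1) = rm x (spow n).
Proof.
have [a [b spowE]] := spow_oplane n.+1.
by rewrite -(omul_spowS n) {1 3}(oplane_id s) spowE rm_oplaneA.
Qed.

Lemma rm_spowS_s x n : rm (rm x (spow n.+1)) s = rm x (spow n).
Proof.
have [a [b spowE]] := spow_oplane n.+1.
by rewrite -(omul_spowSl n) {2 4}(oplane_id s) spowE rm_oplaneA.
Qed.

End InversePowers.

Section Resolvent.
Variables (T : V -> V) (s : oct R) (C : R).
Hypotheses (T_linear : linear T) (T_pow : forall n, BRO lm rm (iter n T)).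
Hypotheses (C_ge0 : 0 <= C) (T_le : forall x, `|T x| <= C * `|x|) (C_lt : C < onorm s).

Local Notation spow n := (oexp (octinv s) n).

Lemma iterT_linear n : linear (iter n T).
Proof. by case: (T_pow n) => [[]]. Qed.

Lemma iterT_paralinear n : paralinear (iter n T).
Proof. by case: (T_pow n). Qed.

Lemma iterT_commute n : real_rm_commute (iter n T).
Proof. exact: paralinear_commute (iterT_linear n) (iterT_paralinear n). Qed.

Lemma onorm_s_gt0 : 0 < onorm s.
Proof. exact: le_lt_trans C_ge0 C_lt. Qed.

Lemma onorm2_s_neq0 : onorm2 s != 0.
Proof.
by apply: contraTneq onorm_s_gt0 => s0; rewrite /onorm s0 sqrtr0 ltxx.
Qed.

Let rho := (onorm s)^-1.
Let k := C * rho.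

Lemma onorm_spow n : onorm (spow n) = rho ^+ n.
Proof. by rewrite onorm_oexp onormV // onorm2_s_neq0. Qed.

Lemma rho_ge0 : 0 <= rho.
Proof. by rewrite invr_ge0 ltW // onorm_s_gt0. Qed.

Lemma k_ge0 : 0 <= k.
Proof. exact: mulr_ge0 C_ge0 rho_ge0. Qed.

Lemma k_lt1 : k < 1.
Proof. by rewrite /k ltr_pdivrMr ?onorm_s_gt0 // mul1r. Qed.

Let K y := rm (T y) (spow 1).

Lemma K_linear : linear K.
Proof. by move=> a x y; rewrite /K T_linear (rm_linear _). Qed.

Lemma K_le y : `|K y| <= k * `|y|.
Proof. by rewrite /K norm_rm onorm_spow expr1 /k -mulrA mulrCA ler_wpM2l ?rho_ge0. Qed.

Let Sinv x := neumann K (rm x (spow 1)).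
Let B := (1 - k)^-1 * rho.

Lemma B_ge0 : 0 <= B.
Proof. by rewrite mulr_ge0 ?rho_ge0 // invr_ge0 subr_ge0 ltW // k_lt1. Qed.

Lemma Sinv_linear : linear Sinv.
Proof.
by move=> a x y; rewrite /Sinv (rm_linear _) (neumann_linear K_linear K_le k_ge0 k_lt1).
Qed.

Lemma Sinv_le x : `|Sinv x| <= B * `|x|.
Proof.
apply: le_trans (neumann_le K_le k_ge0 k_lt1 _) _.
by rewrite norm_rm onorm_spow expr1 /B mulrA.
Qed.

Lemma Sinv_left x : Sinv (rm x s - T x) = x.
Proof.
rewrite /Sinv rmB (rm_s_spowS onorm2_s_neq0 x 0) rm1.
exact: neumann_subK K_linear K_le k_ge0 k_lt1 x.
Qed.

Lemma Sinv_right x : rm (Sinv x) s - T (Sinv x) = x.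
Proof.
have TE y : T y = rm (K y) s by rewrite /K (rm_spowS_s onorm2_s_neq0 _ 0) rm1.
rewrite TE -rmB (subK_neumann K_linear K_le k_ge0 k_lt1).
by rewrite (rm_spowS_s onorm2_s_neq0 _ 0) rm1.
Qed.

Let right_partial N m := \sum_(n < N) rm (iter n T m) (spow n.+1).

Lemma right_partialE m N : real m ->
  right_partial N m = Sinv m - Sinv (rm (iter N T m) (spow N)).
Proof.
move=> m_real; rewrite -(linB Sinv_linear) -[LHS]Sinv_left; congr Sinv.
elim: N => [|N IH].
  by rewrite /right_partial big_ord0 rm0 (lin0 T_linear) /= rm1 !subrr.
rewrite /right_partial big_ord_recr /= -/(right_partial N m) rmD (linD T_linear).
rewrite opprD addrACA IH (rm_spowS_s onorm2_s_neq0) -(iterT_commute N (spow N.+1) m_real).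
by rewrite -iterS (iterT_commute N.+1 (spow N.+1) m_real) addrA subrK.
Qed.

Lemma right_series_cvg x :
  (fun N => \sum_(n < N) rodot lm rm (iter n T) (spow n.+1) x) @ \oo -->
  Defs.ext lm rm Sinv x.
Proof.
apply: (cvgn_dist_le (e := fun N => 8 * B * `|x| * k ^+ N)) => [|N].
  exact: cvg_geometric0 _ k_ge0 k_lt1.
have -> : \sum_(n < N) rodot lm rm (iter n T) (spow n.+1) x =
    \sum_(i < 8) rm (right_partial N (comp x i)) (obasis i).
  under eq_bigr => n _ do rewrite (rodotE _ x (iterT_linear n) (iterT_commute n)).
  by rewrite exchange_big /=; apply: eq_bigr => i _; rewrite rm_sum.
rewrite /Defs.ext -sumrB.
under eq_bigr do rewrite -rmB right_partialE // addrAC subrr add0r.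
rewrite (_ : 8 * B * `|x| * k ^+ N = 8%:R * (B * (k ^+ N * `|x|))); last by ring.
apply: le_trans (ler_norm_sum _ _ _) (ler_sum_const _) => i.
rewrite norm_rm onorm_basis mul1r normrN; apply: le_trans (Sinv_le _) _.
rewrite ler_wpM2l ?B_ge0 // (_ : k ^+ N * _ = rho ^+ N * (C ^+ N * `|x|)).
  rewrite norm_rm onorm_spow ler_wpM2l ?exprn_ge0 ?rho_ge0 //.
  by apply: le_trans (norm_iter_le _ _ C_ge0 T_le) _; rewrite ler_wpM2l ?exprn_ge0 ?comp_le.
by rewrite /k exprMn; ring.
Qed.

Lemma Re_left_partialE y N :
  \sum_(n < N) ReV (iter n T (rm y (spow n.+1))) =
  ReV (Sinv y) - ReV (iter N T (rm (Sinv y) (spow N))).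
Proof.
elim: N => [|N IH]; first by rewrite big_ord0 /= rm1 subrr.
rewrite big_ord_recr /= IH -{3}[y]Sinv_right rmB (linB (iterT_linear N)) ReB.
rewrite (rm_s_spowS onorm2_s_neq0).
rewrite -(paralinearE (spow N.+1) (T (Sinv y)) (iterT_paralinear N)).
by rewrite -iterSr (paralinearE _ _ (iterT_paralinear N.+1)) addrA subrK.
Qed.

Lemma left_series_cvg x :
  (fun N => \sum_(n < N) lodot lm rm (spow n.+1) (iter n T) x) @ \oo -->
  Defs.lif rm (fun y => ReV (Sinv y)) x.
Proof.
apply: (cvgn_dist_le (e := fun N => 8 * B * `|x| * k ^+ N)) => [|N].
  exact: cvg_geometric0 _ k_ge0 k_lt1.
set P := \sum_(n < N) _.
rewrite {1}(Re_sum_basis P) /Defs.lif -sumrB.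
under eq_bigr do rewrite -rmB /P rm_sum Re_sum.
under eq_bigr do under eq_bigr => n _ do
  rewrite (lodot_Re _ _ _ (iterT_linear n) (iterT_paralinear n)).
under eq_bigr do rewrite Re_left_partialE addrAC subrr add0r.
rewrite (_ : 8 * B * `|x| * k ^+ N = 8%:R * (C ^+ N * (rho ^+ N * (B * `|x|)))).
  apply: le_trans (ler_norm_sum _ _ _) (ler_sum_const _) => i.
  rewrite norm_rm onorm_basis mul1r normrN; apply: le_trans (Re_le _) _.
  apply: le_trans (norm_iter_le _ _ C_ge0 T_le) _; rewrite ler_wpM2l ?exprn_ge0 //.
  rewrite norm_rm onorm_spow ler_wpM2l ?exprn_ge0 ?rho_ge0 //.
  by apply: le_trans (Sinv_le _) _; rewrite norm_rm onorm_conj_basis mul1r.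
by rewrite /k exprMn; ring.
Qed.

Lemma resolvent_regular_inverses :
  exists Sinv : V -> V,
    bounded_linear Sinv /\
    (forall x, Sinv (Rmul rm s x - T x) = x) /\
    (forall x, Rmul rm s (Sinv x) - T (Sinv x) = x) /\
    BRO lm rm (right_reg_inv lm rm Sinv) /\
    BRO lm rm (left_reg_inv lm rm Sinv) /\
    (forall x, (fun N : nat =>
        \sum_(n < N) rodot lm rm (iter n T) (oexp (octinv s) n.+1) x)
        @ \oo --> right_reg_inv lm rm Sinv x) /\
    (forall x, (fun N : nat =>
        \sum_(n < N) lodot lm rm (oexp (octinv s) n.+1) (iter n T) x)
        @ \oo --> left_reg_inv lm rm Sinv x).
Proof.
have ReSinv_linear : linear (fun y => ReV (Sinv y)).
  by move=> a x y; rewrite Sinv_linear ReV_linear.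
have ReSinv_le y : `|ReV (Sinv y)| <= B * `|y|.
  exact: le_trans (Re_le _) (Sinv_le _).
exists Sinv; split; first by split; [exact: Sinv_linear | exists B; exact: Sinv_le].
split; first exact: Sinv_left.
split; first exact: Sinv_right.
split; first split; first split.
- exact: ext_linear Sinv_linear.
- by exists (8 * B); exact: ext_le B_ge0 Sinv_le.
- exact: ext_paralinear Sinv_linear.
split; first split; first split.
- exact: lif_linear ReSinv_linear.
- by exists (8 * B); exact: lif_le B_ge0 ReSinv_le.
- by apply: lif_paralinear ReSinv_linear _ => y; exact: comp_real.
by split; [exact: right_series_cvg | exact: left_series_cvg].
Qed.

End Resolvent.
End OctonionBimodule.

Theorem mainTheorem3 (R : realType) (V : completeNormedModType R)
  (lm : oct R -> V -> V) (rm : V -> oct R -> V) (T : V -> V) (s : oct R) :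
  Banach_Obimodule lm rm ->
  BRO lm rm T -> power_associative lm rm T ->
  opnorm T < onorm s ->
  exists Sinv : V -> V,
    bounded_linear Sinv /\
    (forall x, Sinv (Rmul rm s x - T x) = x) /\
    (forall x, Rmul rm s (Sinv x) - T (Sinv x) = x) /\
    BRO lm rm (right_reg_inv lm rm Sinv) /\
    BRO lm rm (left_reg_inv lm rm Sinv) /\
    (forall x, (fun N : nat =>
        \sum_(n < N) rodot lm rm (iter n T) (oexp (octinv s) n.+1) x)
        @ \oo --> right_reg_inv lm rm Sinv x) /\
    (forall x, (fun N : nat =>
        \sum_(n < N) lodot lm rm (oexp (octinv s) n.+1) (iter n T) x)
        @ \oo --> left_reg_inv lm rm Sinv x).
Proof.
move=> bimod [[T_linear [C0 T_le0]] _] T_pow T_lt.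
have bound_normC0 : [set C : R | 0 <= C /\ forall x, `|T x| <= C * `|x|] `|C0|.
  split=> [|x]; first exact: normr_ge0.
  by apply: le_trans (T_le0 x) _; rewrite ler_wpM2r ?ler_norm.
have [C [C_ge0 T_le] C_lt] := inf_lt (ex_intro _ _ bound_normC0) T_lt.
exact: (@resolvent_regular_inverses _ _ _ _ bimod T s C T_linear T_pow C_ge0 T_le C_lt).
Qed.
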